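(* Let $X$ be a Tychonoff $\Delta$-space and let $\varphi:X\to Y$ be a quotient continuous surjection onto a Tychonoff space $Y$ such that only finitely many fibers $\varphi^{-1}(y)$, $y\in Y$, have more than one point. Then $Y$ is a $\Delta$-space.
   Context: A topological space $X$ is a $\Delta$-space if for every decreasing sequence $\{D_n:n\in\omega\}$ of subsets of $X$ with $\bigcap_n D_n=\emptyset$ there is a decreasing sequence $\{V_n:n\in\omega\}$ of open subsets of $X$ with $D_n\subseteq V_n$ for all $n$ and $\bigcap_n V_n=\emptyset$. *)

From HB Require Import structures.
From mathcomp Require Import all_boot all_order all_algebra.
From mathcomp Require Import all_classical all_reals all_analysis.
Set Implicit Arguments. Unset Strict Implicit. Unset Printing Implicit Defensive.
Local Open Scope classical_set_scope.

Definition delta_space (X : topologicalType) : Prop :=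
  forall D : nat -> set X,
    (forall n, D n.+1 `<=` D n) ->
    \bigcap_n D n = set0 ->
    exists V : nat -> set X,
      [/\ forall n, open (V n),
          forall n, V n.+1 `<=` V n,
          forall n, D n `<=` V n &
          \bigcap_n V n = set0].

Definition tychonoff_space (X : topologicalType) : Prop :=
  completely_regular_space X /\ accessible_space X.

Definition quotient_map (X Y : topologicalType) (f : X -> Y) : Prop :=
  [/\ continuous f,
      forall y : Y, exists x : X, f x = y &
      forall U : set Y, open (f @^-1` U) -> open U].

From HB Require Import structures.
From mathcomp Require Import all_boot all_order all_algebra.
From mathcomp Require Import all_classical all_reals all_analysis.
Local Open Scope classical_set_scope.

(* Let phi : X -> Y be a quotient surjection whose non-trivial
   fibres lie over a finite set F, and let D_n be a decreasing sequence in Y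
   with empty intersection.  The preimages phi^-1(D_n) form such a sequence in
   X, so the Delta-property of X yields decreasing open W_n containing them
   with empty intersection.  We push W_n back to Y through its saturated core
   core(W_n) = {y | phi^-1(y) ⊆ W_n}.  The cores are decreasing, contain D_n,
   and have empty intersection since phi is surjective.  They are open: the
   preimage of core(W) is W minus the preimage of the finite, hence closed
   (Y is T1), set of points of F whose fibre is not contained in W; this
   preimage is open, so core(W) is open because phi is a quotient map. *)

Section SaturatedCore.
Context {X Y : Type} (phi : X -> Y).

(* The saturated core of W: the points of Y whose whole fibre lies in W.
   It is the largest subset of Y whose preimage is contained in W. *)
Definition core (W : set X) : set Y := [set y | forall x, phi x = y -> W x].

Lemma core_monotone {W W' : set X} : W `<=` W' -> core W `<=` core W'.
Proof. by move=> WW' y Wy x /Wy /WW'. Qed.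

Lemma sub_core {D : set Y} {W : set X} : phi @^-1` D `<=` W -> D `<=` core W.
Proof. by move=> DW y Dy x phixy; apply: DW; rewrite /= phixy. Qed.

Lemma bigcap_core_empty {W : nat -> set X} :
  (forall y, exists x, phi x = y) -> \bigcap_n W n = set0 ->
  \bigcap_n core (W n) = set0.
Proof.
move=> phi_surj W0; rewrite -subset0 => y Wy.
have [x phixy] := phi_surj y.
have : (\bigcap_n W n) x by move=> n _; exact: Wy n I x phixy.
by rewrite W0.
Qed.

(* If a fibre is not contained in W then some point of it is outside W, so a
   point of W over y witnesses that the fibre of y has two points. *)
Lemma preimage_core (W : set X) :
  phi @^-1` core W =
  W `\` phi @^-1` [set y | (exists x1 x2, [/\ x1 <> x2, phi x1 = y & phi x2 = y])
                           /\ ~ core W y].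
Proof.
apply/seteqP; split => x /=.
  by move=> Wx; split; [exact: Wx | case].
move=> [Wx not_bad] x' phix'x.
have [->|x'x] := pselect (x' = x); first exact: Wx.
apply: contra_notP not_bad => Wx'; split; first by exists x', x.
by move=> core_x; apply: Wx'; exact: core_x.
Qed.

End SaturatedCore.

Lemma preimage_decreasing_empty {X Y : Type} (phi : X -> Y) (D : nat -> set Y) :
  (forall n, D n.+1 `<=` D n) -> \bigcap_n D n = set0 ->
  (forall n, phi @^-1` D n.+1 `<=` phi @^-1` D n) /\
  \bigcap_n phi @^-1` D n = set0.
Proof.
move=> Ddec D0; split; first by move=> n x /Ddec.
rewrite -subset0 => x Dx.
have : (\bigcap_n D n) (phi x) by move=> n _; exact: Dx.
by rewrite D0.
Qed.

(* For a quotient map onto a T1 space whose non-trivial fibres lie over a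
   finite set, the core of an open set is open: its preimage is an open set
   minus the (closed) preimage of a finite set. *)
Lemma open_core {X Y : topologicalType} {phi : X -> Y} {W : set X} :
  accessible_space Y -> quotient_map phi ->
  finite_set [set y : Y | exists x1 x2 : X,
                 [/\ x1 <> x2, phi x1 = y & phi x2 = y]] ->
  open W -> open (core phi W).
Proof.
move=> T1Y [phi_cont _ phi_quot] F_fin Wo; apply: phi_quot.
rewrite preimage_core; apply: openI Wo _; apply: closed_openC.
apply: preimage_closed => [x _|]; first exact: phi_cont.
apply: (proj1 (@accessible_finite_set_closed Y) T1Y).
by apply: sub_finite_set F_fin => y [].
Qed.

Theorem proposition5p2 (X Y : topologicalType) (phi : X -> Y) :
  tychonoff_space X -> delta_space X ->
  tychonoff_space Y ->
  quotient_map phi ->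
  finite_set [set y : Y | exists x1 x2 : X,
                 [/\ x1 <> x2, phi x1 = y & phi x2 = y]] ->
  delta_space Y.
Proof.
move=> _ deltaX [_ T1Y] phi_quot F_fin D Ddec D0.
have [pre_dec pre0] := preimage_decreasing_empty phi D Ddec D0.
have [W [Wo Wdec DW W0]] := deltaX _ pre_dec pre0.
have [_ phi_surj _] := phi_quot.
exists (fun n => core phi (W n)); split.
- by move=> n; exact: (open_core T1Y phi_quot F_fin (Wo n)).
- by move=> n; exact: (core_monotone phi (Wdec n)).
- by move=> n; exact: (sub_core phi (DW n)).
- exact: (bigcap_core_empty phi phi_surj W0).
Qed.
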